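(* Let $n\ge2$ and $k\ge1$ be integers, and let $c(n-1,k)$ be the number of Young diagrams fitting in the staircase shape $(n-1,n-2,\dots,1)$ that have exactly $k$ corners $(i,j)$ satisfying $i+j<n$. Then $$c(n-1,k)=\sum_{i=1}^{n-1-k}\frac{i}{n-i}\binom{n-i}{k}\binom{n-1}{k+i}.$$ Furthermore, there are exactly $2^{n-1}$ Young diagrams fitting in $(n-1,n-2,\dots,1)$ that have no corner $(i,j)$ with $i+j<n$ (i.e. all of whose corners lie on the diagonal $i+j=n$; the empty diagram is included).
   Context: Young diagrams are drawn in English notation: the diagram of a partition $\lambda=(\lambda_1\ge\lambda_2\ge\dots)$ is the set of cells $(i,j)$ with $1\le j\le\lambda_i$, row $i$ counted from the top and column $j$ from the left. It fits in $(n-1,n-2,\dots,1)$ if $\lambda_i\le n-i$ for all $i$. A corner of the diagram is a cell $(i,j)$ of it such that neither $(i+1,j)$ nor $(i,j+1)$ belongs to the diagram. *)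

From mathcomp Require Import all_boot all_order all_algebra.
Set Implicit Arguments. Unset Strict Implicit. Unset Printing Implicit Defensive.

(* A Young diagram fitting in the staircase (n-1, n-2, ..., 1) is encoded by
   its row lengths lambda_1, ..., lambda_(n-1): the function l : 'I_(n-1) -> 'I_n
   with l i = lambda_(i+1) (rows beyond n-1 are empty). *)
Definition diagram n := {ffun 'I_(n - 1) -> 'I_n}.

(* lambda_i for a 1-indexed row i (0 outside rows 1..n-1). *)
Definition rowlen n (l : diagram n) (i : nat) : nat :=
  if i is i'.+1 then
    (if insub i' is Some r then nat_of_ord (l r) else 0)
  else 0.

Definition in_staircase n (l : diagram n) : bool :=
  [forall i : 'I_(n - 1), (l i <= n - i.+1)%N] &&
  [forall i : 'I_(n - 1), forall j : 'I_(n - 1), (i <= j)%N ==> (l j <= l i)%N].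

(* cell (i,j) (English notation, 1-indexed) belongs to the diagram *)
Definition in_diag n (l : diagram n) (i j : nat) : bool :=
  (1 <= j)%N && (j <= rowlen l i)%N.

Definition is_corner n (l : diagram n) (i j : nat) : bool :=
  [&& in_diag l i j, ~~ in_diag l i.+1 j & ~~ in_diag l i j.+1].

(* number of corners (i,j) with i + j < n (cells of the diagram have i,j < n) *)
Definition low_corners n (l : diagram n) : nat :=
  #|[set p : 'I_n * 'I_n | is_corner l p.1 p.2 && (p.1 + p.2 < n)%N]|.

Definition c_count n k : nat :=
  #|[set l : diagram n | in_staircase l && (low_corners l == k)]|.

From mathcomp Require Import all_boot all_order all_algebra.
From mathcomp Require Import zify ring lra.
Import GRing.Theory Num.Theory.
Set Implicit Arguments. Unset Strict Implicit. Unset Printing Implicit Defensive.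

(* Encode a diagram by the list of its row lengths, top row first, and build it
   by adding a new top row above a diagram in the staircase with one row less.
   If the old top row has length h and the new one has length v, then h <= v;
   v = h creates no corner, h < v <= p a corner off the diagonal, v = p + 1 a
   corner on the diagonal.  Hence the numbers T_p(k, z) of diagrams with k low
   and z diagonal corners are governed by the binomial moments
   sum C(p - h, r) of the free width p - h.  By the hockey-stick identity these
   moments satisfy a closed system of recurrences, from which the first moment
   can be eliminated; this leaves a local recurrence for T_p(k, z) alone.  The
   closed form T_p(0, z) = C(p, z), T_p(k, z) = (z+1)/k C(p-z-1, k-1) C(p, k+z+1)
   satisfies the same recurrence, and summing over z gives both statements
   (the second one by the binomial theorem). *)

Fixpoint stair_seq (s : seq nat) : bool :=
  if s is v :: s' then [&& head 0 s' <= v, v <= (size s').+1 & stair_seq s'] else true.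

(* A row ends in a corner iff the row below it is shorter; that corner lies on the
   diagonal iff the row has the maximal length allowed by [stair_seq]. *)
Fixpoint seq_low_corners (s : seq nat) : nat :=
  if s is v :: s' then ((head 0 s' < v) && (v <= size s')) + seq_low_corners s' else 0.

Fixpoint seq_diag_corners (s : seq nat) : nat :=
  if s is v :: s' then ((head 0 s' < v) && (v == (size s').+1)) + seq_diag_corners s'
  else 0.

Fixpoint stair_seqs (p : nat) : seq (seq nat) :=
  if p is p'.+1 then
    [seq v :: s | s <- stair_seqs p', v <- index_iota (head 0 s) p'.+2]
  else [:: [::]].

Lemma stair_seq_head s : stair_seq s -> head 0 s <= size s.
Proof. by case: s => //= v s /and3P[]. Qed.

Lemma mem_stair_seqs p s : (s \in stair_seqs p) = (size s == p) && stair_seq s.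
Proof.
elim: p s => [|p IHp] s /=; first by rewrite inE; case: s.
apply/allpairsPdep/idP => [[s' [v [s'p v_range ->]]] | ].
  move: s'p v_range; rewrite IHp mem_index_iota => /andP[/eqP <- s'_stair] v_range.
  by rewrite /= eqxx s'_stair /= andbT.
case: s => // v s /andP[/=]; rewrite eqSS => /eqP sz_s /and3P[hv vp s_stair].
exists s, v; rewrite IHp sz_s eqxx s_stair mem_index_iota hv.
by rewrite -sz_s ltnS vp.
Qed.

Lemma uniq_stair_seqs p : uniq (stair_seqs p).
Proof.
elim: p => [|p IHp] //=; apply: allpairs_uniq_dep => //.
  by move=> s _; apply: iota_uniq.
by move=> [s1 v1] [s2 v2] _ _ /= [-> ->].
Qed.

Lemma stair_seq_nth s : stair_seq s =
  all (fun i => (nth 0 s i.+1 <= nth 0 s i) && (nth 0 s i <= size s - i)) (iota 0 (size s)).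
Proof.
elim: s => [|v s IHs] //=.
by rewrite (iotaDl 1 0) all_map subn0 IHs -andbA; case: s {IHs}.
Qed.

Lemma seq_low_corners_nth s : seq_low_corners s =
  count (fun i => (nth 0 s i.+1 < nth 0 s i) && (nth 0 s i < size s - i)) (iota 0 (size s)).
Proof.
elim: s => [|v s IHs] //=.
by rewrite (iotaDl 1 0) count_map subn0 IHs ltnS; case: s {IHs}.
Qed.

Lemma seq_diag_corners_le s : seq_diag_corners s <= size s.
Proof. by elim: s => [|v s IHs] //=; case: (_ && _); rewrite ?add1n ?ltnS // ltnW. Qed.

Lemma card_ord_count m (P : pred nat) : #|[set i : 'I_m | P i]| = count P (iota 0 m).
Proof. by rewrite cardsE cardE size_filter -enumT -val_enum_ord count_map. Qed.

Definition row_lengths n (l : diagram n) : seq nat :=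
  [seq nat_of_ord (l i) | i <- enum 'I_(n - 1)].

Lemma size_row_lengths n (l : diagram n) : size (row_lengths l) = n - 1.
Proof. by rewrite size_map size_enum_ord. Qed.

Lemma nth_row_lengths n (l : diagram n) (i : 'I_(n - 1)) : nth 0 (row_lengths l) i = l i.
Proof. by rewrite (nth_map i) ?size_enum_ord // nth_ord_enum. Qed.

Lemma rowlenS n (l : diagram n) i : rowlen l i.+1 = nth 0 (row_lengths l) i.
Proof.
rewrite /rowlen; case: insubP => [r _ <- | ]; first by rewrite nth_row_lengths.
by rewrite -leqNgt => ?; rewrite nth_default // size_row_lengths.
Qed.

Lemma row_lengths_inj n : injective (@row_lengths n).
Proof.
by move=> l1 l2 eq_rows; apply/ffunP => i; apply/val_inj; rewrite /= -!nth_row_lengths eq_rows.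
Qed.

Lemma is_cornerE n (l : diagram n) i j :
  is_corner l i j = [&& 0 < j, j == rowlen l i & rowlen l i.+1 < j].
Proof. by rewrite /is_corner /in_diag; lia. Qed.

Lemma in_staircaseE n (l : diagram n) : in_staircase l = stair_seq (row_lengths l).
Proof.
set s := row_lengths l.
have nth_s (i : 'I_(n - 1)) : nth 0 s i = l i by exact: nth_row_lengths.
have nth_out i : ~~ (i < n - 1) -> nth 0 s i = 0.
  by rewrite -leqNgt => ?; rewrite nth_default // size_row_lengths.
rewrite stair_seq_nth size_row_lengths all_predI andbC; congr (_ && _).
  apply/forallP/allP => [bound i | bound i].
    by rewrite mem_iota => /andP[_ lt_i]; have := bound (Ordinal lt_i); rewrite -nth_s /=; lia.
  by have := bound i; rewrite mem_iota ltn_ord nth_s => /(_ isT); lia.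
have step_iff : (forall i, nth 0 s i.+1 <= nth 0 s i) <->
                all (fun i => nth 0 s i.+1 <= nth 0 s i) (iota 0 (n - 1)).
  split=> [step | /allP step i]; first by apply/allP.
  case: (ltnP i (n - 1)) => [lt_i | ge_i]; first by apply: step; rewrite mem_iota.
  by rewrite !nth_out // -leqNgt // ltnW.
apply/idP/idP => [/forallP mono | /step_iff step].
  apply/step_iff => i; case: (ltnP i.+1 (n - 1)) => [lt_i1 | ge_i1]; last first.
    by rewrite nth_out // -leqNgt.
  have lt_i : i < n - 1 by exact: ltnW.
  rewrite -[i.+1]/(Ordinal lt_i1 : nat) -[i]/(Ordinal lt_i : nat) !nth_s.
  by have /forallP/(_ (Ordinal lt_i1))/implyP := mono (Ordinal lt_i); apply.
apply/forallP => i; apply/forallP => j; apply/implyP => le_ij; rewrite -!nth_s.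
exact: (@homo_leq _ (nth 0 s) (fun x y => y <= x) (fun _ => leqnn _)
          (fun _ _ _ h1 h2 => leq_trans h2 h1) step _ _ le_ij).
Qed.

Lemma low_cornersE n (l : diagram n.+1) : low_corners l = seq_low_corners (row_lengths l).
Proof.
rewrite seq_low_corners_nth size_row_lengths -card_ord_count /low_corners.
set s := row_lengths l.
pose f (i : 'I_(n.+1 - 1)) : 'I_n.+1 * 'I_n.+1 := (inord i.+1, inord (nth 0 s i)).
have f_inj : injective f.
  move=> i1 i2 [/(congr1 val) /= eq1 _]; apply: ord_inj; move: eq1.
  by rewrite !inordK; have := ltn_ord i1; have := ltn_ord i2; lia.
rewrite -(card_imset _ f_inj); apply: eq_card => -[a b]; rewrite !inE /= is_cornerE.
apply/idP/imsetP => [/andP[/and3P[b_gt0 /eqP b_row row_lt] b_small] | [i]].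
  case: a b_row row_lt b_small => -[|i] lt_i b_row; first by rewrite b_row in b_gt0.
  rewrite -[nat_of_ord (Ordinal lt_i)]/i.+1 !rowlenS -/s in b_row * => row_lt b_small.
  have lt_i_n : i < n.+1 - 1.
    by rewrite ltnNge; apply/negP => ?; rewrite nth_default ?size_row_lengths in b_row; lia.
  exists (Ordinal lt_i_n); first by rewrite inE /=; lia.
  by rewrite /f; congr (_, _); apply/val_inj; rewrite /= inordK //; lia.
rewrite inE => /andP[row_lt row_small] [-> ->].
have lt_i := ltn_ord i.
by rewrite !inordK ?rowlenS -/s; lia.
Qed.

Lemma perm_row_lengths_stair_seqs n :
  perm_eq [seq row_lengths l | l : diagram n.+1 in @in_staircase n.+1] (stair_seqs n).
Proof.
apply: uniq_perm; rewrite ?uniq_stair_seqs ?(map_inj_uniq (@row_lengths_inj _)) ?enum_uniq //.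
move=> s; rewrite mem_stair_seqs; apply/imageP/andP => [[l l_stair ->] | [/eqP size_s s_stair]].
  by rewrite size_row_lengths -in_staircaseE subn1.
have nth_s_lt i : i < n -> nth 0 s i < n.+1.
  move: s_stair; rewrite stair_seq_nth size_s => /allP s_stair lt_i.
  by have := s_stair i; rewrite mem_iota lt_i => /(_ isT) /andP[_]; lia.
pose l : diagram n.+1 := [ffun i : 'I_(n.+1 - 1) => inord (nth 0 s i)].
have rows_l : row_lengths l = s.
  apply: (@eq_from_nth _ 0); first by rewrite size_row_lengths size_s subn1.
  move=> i; rewrite size_row_lengths => lt_i.
  rewrite -[i]/(Ordinal lt_i : nat) nth_row_lengths ffunE inordK // nth_s_lt //=; lia.
exists l; last by rewrite rows_l.
by rewrite -[l \in _]/(in_staircase l) in_staircaseE rows_l.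
Qed.

Lemma c_count_stair_seqs n k :
  c_count n.+1 k = count (fun s => seq_low_corners s == k) (stair_seqs n).
Proof.
rewrite -(permP (perm_row_lengths_stair_seqs n)) count_map.
rewrite /c_count -size_filter /enum_mem -filter_predI cardsE cardE /enum_mem.
by congr size; apply: eq_filter => l; rewrite /= !unfold_in /= low_cornersE andbC.
Qed.

Lemma hockey_stick a r : \sum_(d < a) 'C(d.+1, r.+1) = 'C(a.+1, r.+2).
Proof. by elim: a => [|a IHa]; rewrite ?big_ord0 // big_ord_recr /= IHa [RHS]binS addnC. Qed.

(* [p - head 0 s] is the number of lengths of a new top row that create a low corner. *)
Definition bmoment p r k z :=
  \sum_(s <- stair_seqs p)
    ((seq_low_corners s == k) && (seq_diag_corners s == z)) * 'C(p - head 0 s, r).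

Definition bmoment_predk p r k z := if k is k'.+1 then bmoment p r k' z else 0.
Definition bmoment_predz p r k z := if z is z'.+1 then bmoment p r k z' else 0.

Lemma sum_bin_rev h p r : h <= p ->
  \sum_(h.+1 <= v < p.+1) 'C(p.+1 - v, r) = \sum_(d < p - h) 'C(d.+1, r).
Proof.
move=> hp; rewrite big_nat_rev /= -{1}[h.+1]add0n big_addn big_mkord.
by apply: eq_bigr => -[d /= hd] _; congr 'C(_, _); lia.
Qed.

Lemma bmoment_add_row p r k z :
  bmoment p.+1 r k z = \sum_(s <- stair_seqs p)
    ( ((seq_low_corners s == k) && (seq_diag_corners s == z)) * 'C((p - head 0 s).+1, r)
    + (((seq_low_corners s).+1 == k) && (seq_diag_corners s == z))
        * \sum_(d < p - head 0 s) 'C(d.+1, r)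
    + ((seq_low_corners s == k) && ((seq_diag_corners s).+1 == z)) * (r == 0)).
Proof.
rewrite /bmoment /= big_allpairs_dep; apply: eq_big_seq => s.
rewrite mem_stair_seqs => /andP[/eqP sz_s /stair_seq_head]; rewrite sz_s => hp.
have hp1 : head 0 s < p.+1 by rewrite ltnS.
rewrite /= sz_s big_ltn; last exact: ltnW.
rewrite big_nat_recr //= hp1 !ltnn (ltn_eqF hp1) eqxx subnn bin0n subSn //.
rewrite !add0n andbT add1n -sum_bin_rev // big_distrr /=.
under eq_big_nat => v /andP[hv vp] do rewrite hv -ltnS vp /= (ltn_eqF vp).
ring.
Qed.

Lemma bmomentSS p r k z :
  bmoment p.+1 r.+1 k z =
    bmoment p r.+1 k z + bmoment p r k z + bmoment_predk p r.+2 k z + bmoment_predk p r.+1 k z.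
Proof.
rewrite bmoment_add_row.
under eq_bigr => s _ do rewrite hockey_stick !binS !mulnDr muln0 addn0.
rewrite !big_split /= -!addnA; congr (_ + (_ + _)).
case: k => [|k] /=; first by rewrite !big1.
by rewrite -big_split; apply: eq_bigr => s _; rewrite eqSS.
Qed.

Lemma bmomentS0 p k z :
  bmoment p.+1 0 k z = bmoment p 0 k z + bmoment_predz p 0 k z + bmoment_predk p 1 k z.
Proof.
have sum_bin0 a : \sum_(d < a) 'C(d.+1, 0) = a.
  by rewrite (eq_bigr (fun=> 1)) ?sum_nat_const ?card_ord ?muln1.
rewrite bmoment_add_row; under eq_bigr => s _ do rewrite sum_bin0 !bin0.
rewrite !big_split /= [X in _ = X]addnAC; congr (_ + _ + _).
- by apply: eq_bigr => s _; rewrite bin0.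
- case: k => [|k] /=; first by rewrite big1.
  by apply: eq_bigr => s _; rewrite eqSS bin1.
- case: z => [|z] /=; first by rewrite big1 // => s _; rewrite andbF.
  by apply: eq_bigr => s _; rewrite eqSS bin0.
Qed.

Lemma bmoment0 r k z : bmoment 0 r k z = ((k == 0) && (z == 0)) * 'C(0, r).
Proof. by rewrite /bmoment /= big_seq1 !(eq_sym 0). Qed.

(* Eliminates the first moment from [bmomentS0]. *)
Lemma bmomentS_diag p r k z :
  bmoment p r.+1 k z = bmoment_predk p r.+1 k z.+1 + bmoment p r k z.+1.
Proof.
elim: p r k z => [|p IHp] r k z.
  by case: k => [|k]; rewrite /= !bmoment0 ?andbF ?muln0.
rewrite bmomentSS; case: k => [|k] /=.
  rewrite !addn0; case: r => [|r].
    by rewrite bmomentS0 /= addn0 (IHp 0 0 z) /= add0n addnC.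
  by rewrite bmomentSS /= !addn0 (IHp r.+1 0 z) (IHp r 0 z).
rewrite bmomentSS (IHp r k.+1 z) (IHp r.+1 k z) (IHp r k z) /=.
case: r => [|r] /=; first by rewrite bmomentS0 /=; lia.
by rewrite bmomentSS (IHp r k.+1 z) /=; lia.
Qed.

Definition stair_count p k z := bmoment p 0 k z.

Lemma stair_count0 k z : stair_count 0 k z = (k == 0) && (z == 0).
Proof. by rewrite /stair_count bmoment0 muln1. Qed.

Lemma stair_countS0 p z :
  stair_count p.+1 0 z = stair_count p 0 z + (if z is z'.+1 then stair_count p 0 z' else 0).
Proof. by rewrite /stair_count bmomentS0 addn0. Qed.

Lemma stair_countSS p k z :
  stair_count p.+1 k.+1 z + stair_count p k z =
  (if z is z'.+1 then stair_count p k.+1 z' else 0)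
    + stair_count p k.+1 z + stair_count p.+1 k z.+1.
Proof.
rewrite /stair_count !bmomentS0 /= (bmomentS_diag p 0 k z).
by case: z => [|z]; case: k => [|k] /=; lia.
Qed.

Section ClosedForm.
Local Open Scope ring_scope.

Lemma natr_binSr (R : numFieldType) n k :
  'C(n, k.+1)%:R = (n%:R - k%:R) / k.+1%:R * 'C(n, k)%:R :> R.
Proof.
case: (leqP k n) => [kn | nk]; last by rewrite !bin_small ?mulr0 // ltnW.
have k1_neq0 : k.+1%:R != 0 :> R by rewrite pnatr_eq0.
apply: (mulfI k1_neq0); rewrite -natrM mul_bin_left natrM natrB //.
by field; rewrite nat1r.
Qed.

Definition stair_count_closed (m k z : nat) : rat :=
  if k is k'.+1 then z.+1%:R / k%:R * 'C(m - z.+1, k')%:R * 'C(m, k' + z.+2)%:R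
  else 'C(m, z)%:R.

Lemma stair_count_closed_small m k z :
  (m < k + z.+2)%N -> stair_count_closed m k.+1 z = 0.
Proof. by move=> small; rewrite /= (bin_small small) mulr0. Qed.

Lemma stair_count_closed_pred m k z :
  (if z is z'.+1 then stair_count_closed m k.+1 z' else 0)
  = z%:R / k.+1%:R * 'C(m - z, k)%:R * 'C(m, k + z.+1)%:R.
Proof. by case: z => [|z] /=; rewrite ?mul0r // addnS. Qed.

Lemma stair_count_closed_rec m k z :
  stair_count_closed m.+1 k.+1 z + stair_count_closed m k z =
  (if z is z'.+1 then stair_count_closed m k.+1 z' else 0)
    + stair_count_closed m k.+1 z + stair_count_closed m.+1 k z.+1.
Proof.
rewrite stair_count_closed_pred; case: k => [|k] /=.
  by rewrite !bin0 !add0n !binS !natrD; field.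
case: (leqP m z) => [mz | zm].
  rewrite (@bin_small m (k.+1 + z.+1)) ?mulr0 ?add0r; last lia.
  by rewrite !(@bin_small _ (_ + _)) ?mulr0 ?addr0 //; lia.
have [A ->] : exists A, m = (A + z.+1)%N by exists (m - z.+1)%N; rewrite subnK.
have -> : ((A + z.+1).+1 - z.+1 = A.+1)%N by lia.
have -> : ((A + z.+1) - z = A.+1)%N by lia.
have -> : ((A + z.+1).+1 - z.+2 = A)%N by lia.
set N := (k + z.+2)%N.
have -> : (k.+1 + z.+2 = N.+1)%N by rewrite /N addSn.
have -> : (k.+1 + z.+1 = N)%N by rewrite /N addSnnS.
have -> : (k + z.+3 = N.+1)%N by rewrite /N addnS.
rewrite addnK !binS !natrD (natr_binSr _ A k) (natr_binSr _ (A + z.+1) N).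
rewrite /N -addnS !natrD.
have := ler0n rat k; have := ler0n rat z => z_ge0 k_ge0.
by field; apply/and3P; split; apply/eqP; lra.
Qed.

Lemma natr_stair_count m k z : (stair_count m k z)%:R = stair_count_closed m k z.
Proof.
elim: k m z => [|k IHk] m.
  elim: m => [|m IHm] z; first by rewrite stair_count0 /= bin0n.
  rewrite stair_countS0 natrD IHm /=.
  by case: z => [|z]; rewrite ?bin0 ?addr0 // (IHm z) binS natrD.
elim: m => [|m IHm] z.
  by rewrite stair_count0 stair_count_closed_small ?addnS.
apply: (@addIr _ (stair_count_closed m k z)).
rewrite stair_count_closed_rec -IHk -IHm -IHk -natrD stair_countSS !natrD.
by case: z => [|z]; rewrite ?IHm.
Qed.

Lemma stair_count_closedE n k i : (i < n)%N ->
  stair_count_closed n k.+1 i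
  = i.+1%:R / (n.+1 - i.+1)%:R * 'C(n.+1 - i.+1, k.+1)%:R * 'C(n, k.+1 + i.+1)%:R.
Proof.
move=> lt_i; rewrite /= subSS addSnnS.
have width_neq0 : (n - i)%:R != 0 :> rat by rewrite pnatr_eq0 -lt0n subn_gt0.
have -> : 'C(n - i, k.+1)%:R = (n - i)%:R * 'C(n - i.+1, k)%:R / k.+1%:R :> rat.
  by rewrite -natrM subnS mul_bin_diag natrM; field; rewrite nat1r pnatr_eq0.
move: width_neq0; set w := (n - i)%:R => width_neq0.
by field; rewrite nat1r pnatr_eq0 width_neq0.
Qed.

Lemma sum_stair_count_closed n k :
  \sum_(z < n.+1) stair_count_closed n k.+1 z =
  \sum_(1 <= i < n.+1 - k.+1)
     i%:R / (n.+1 - i)%:R * 'C(n.+1 - i, k.+1)%:R * 'C(n, k.+1 + i)%:R.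
Proof.
rewrite -(big_mkord xpredT) [X in _ = X](big_addn 0 _ 1).
rewrite [X in _ = X](big_nat_widen _ _ n.+1); last lia.
rewrite [X in _ = X]big_mkcond.
apply: eq_big_nat => i /andP[_ ?].
case: ifP => [? | /negbT]; first by rewrite addn1 stair_count_closedE //; lia.
by rewrite -leqNgt => ?; apply: stair_count_closed_small; lia.
Qed.

End ClosedForm.

Lemma c_count_sum n k : c_count n.+1 k = \sum_(z < n.+1) stair_count n k z.
Proof.
rewrite c_count_stair_seqs -sum1_count /stair_count /bmoment exchange_big /= big_mkcond.
apply: eq_big_seq => s; rewrite mem_stair_seqs => /andP[/eqP size_s _].
have diag_lt : seq_diag_corners s < n.+1 by rewrite ltnS -size_s seq_diag_corners_le.
rewrite (bigD1 (Ordinal diag_lt)) //= big1 => [|z /eqP ne_z].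
  by rewrite eqxx andbT bin0 muln1 addn0; case: (_ == k).
case: (seq_diag_corners s =P z) => [diag_z | _]; last by rewrite andbF.
by exfalso; apply: ne_z; apply: val_inj; rewrite /= diag_z.
Qed.

Theorem proposition2p9 (n : nat) (hn : (2 <= n)%N) :
  (forall k : nat, (1 <= k)%N ->
     ((c_count n k)%:R : rat) =
       (\sum_(1 <= i < n - k)
          (i%:R / (n - i)%N%:R) * ('C(n - i, k))%:R * ('C(n - 1, k + i))%:R)%R) /\
  c_count n 0 = (2 ^ (n - 1))%N.
Proof.
case: n hn => [|n] // _.
split => [[|k] // _ | ]; rewrite c_count_sum.
  rewrite natr_sum; under eq_bigr => z _ do rewrite natr_stair_count.
  by rewrite sum_stair_count_closed subn1.
rewrite subn1 -[2]/(1 + 1) expnDn; apply: eq_bigr => z _.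
by apply/eqP; rewrite -(eqr_nat rat) natr_stair_count /= !exp1n !muln1.
Qed.
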